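(* Let $A$ be an AP-irreducible sign pattern matrix of order $n$. If $A[\alpha,\beta]$ contains no entry equal to $+$ for any two distinct irreducible components $\alpha$ and $\beta$ of $A_+$, then $A$ allows algebraic positivity.
   Context: A sign pattern matrix is a matrix with entries in $\{+,-,0\}$. Its qualitative class $Q(A)$ is the set of real matrices obtained by replacing each $+$ by some positive number, each $-$ by some negative number and each $0$ by $0$. A real square matrix $M$ is algebraically positive if there is a real polynomial $f$ such that every entry of $f(M)$ is positive. A sign pattern $A$ allows algebraic positivity if some matrix in $Q(A)$ is algebraically positive. The digraph $D(A)$ of an $n\times n$ (sign pattern or real) matrix $A$ has vertex set $\{1,\dots,n\}$ and an arc $i\to j$ iff $a_{ij}\neq 0$; $A$ is irreducible if $n=1$ or $D(A)$ is strongly connected. For a sign pattern $A$: $A_+$ is obtained from $A$ by replacing every entry that is not $+$ by $0$; $A_-$ is obtained by replacing every entry that is not $-$ by $0$; $B_A=A_+-(A_-)^T$, i.e. $(B_A)_{ij}=+$ if $a_{ij}=+$ or $a_{ji}=-$, and $(B_A)_{ij}=0$ otherwise. An irreducible sign pattern $A$ is AP-irreducible if every row and every column of $A$ contains a $+$ and $B_A$ is irreducible. For $\alpha,\beta\subseteq\{1,\dots,n\}$, $A[\alpha,\beta]$ is the submatrix with rows indexed by $\alpha$ and columns indexed by $\beta$, and $A[\alpha]=A[\alpha,\alpha]$. The irreducible components of a sign pattern $M$ of order $n$ are the pairwise disjoint nonempty sets $\alpha_1,\dots,\alpha_m$ partitioning $\{1,\dots,n\}$ such that each $M[\alpha_i]$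 is irreducible and no $\beta\supsetneq\alpha_i$ has $M[\beta]$ irreducible (equivalently, the vertex sets of the strongly connected components of $D(M)$). *)

From HB Require Import structures.
From mathcomp Require Import all_boot all_order all_algebra.
From mathcomp Require Import reals.
Set Implicit Arguments. Unset Strict Implicit. Unset Printing Implicit Defensive.
Import Order.TTheory GRing.Theory Num.Theory.
Local Open Scope ring_scope.

Inductive sign := SPos | SNeg | SZero.

Definition is_pos (s : sign) : bool := if s is SPos then true else false.
Definition is_neg (s : sign) : bool := if s is SNeg then true else false.
Definition is_nonzero (s : sign) : bool := if s is SZero then false else true.

Notation spattern n := 'M[sign]_n.

Definition in_qual_class (R : realType) (n : nat) (A : spattern n) (M : 'M[R]_n) : Prop :=
  forall i j, match A i j with
              | SPos => 0 < M i j
              | SNeg => M i j < 0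
              | SZero => M i j == 0
              end.

Definition alg_positive (R : realType) (n : nat) (M : 'M[R]_n.+1) : Prop :=
  exists f : {poly R}, forall i j, 0 < (horner_mx M f) i j.

Definition allows_AP (R : realType) (n : nat) (A : spattern n.+1) : Prop :=
  exists M : 'M[R]_n.+1, in_qual_class A M /\ alg_positive M.

Definition arc (n : nat) (A : spattern n) : rel 'I_n := fun i j => is_nonzero (A i j).

(* A[alpha] irreducible: D(A[alpha]) strongly connected (paths inside alpha);
   a singleton alpha is irreducible since connect is reflexive. *)
Definition irreducible_on (n : nat) (A : spattern n) (alpha : {set 'I_n}) : bool :=
  [forall i in alpha, forall j in alpha,
     connect (fun x y => [&& x \in alpha, y \in alpha & arc A x y]) i j].

Definition irreducible (n : nat) (A : spattern n) : bool :=
  [forall i, forall j, connect (arc A) i j].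

Definition pos_part (n : nat) (A : spattern n) : spattern n :=
  \matrix_(i, j) (if is_pos (A i j) then SPos else SZero).
Definition neg_part (n : nat) (A : spattern n) : spattern n :=
  \matrix_(i, j) (if is_neg (A i j) then SNeg else SZero).

(* B_A = A_+ - (A_-)^T *)
Definition B_of (n : nat) (A : spattern n) : spattern n :=
  \matrix_(i, j) (if is_pos (A i j) || is_neg (A j i) then SPos else SZero).

Definition AP_irreducible (n : nat) (A : spattern n) : bool :=
  [&& irreducible A,
      [forall i, exists j, is_pos (A i j)],
      [forall j, exists i, is_pos (A i j)] &
      irreducible (B_of A)].

Definition irr_component (n : nat) (M : spattern n) (alpha : {set 'I_n}) : bool :=
  [&& alpha != set0, irreducible_on M alpha &
      [forall beta : {set 'I_n}, (alpha \proper beta) ==> ~~ irreducible_on M beta]].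

(* Every arc of B_A lies on a closed walk of B_A, and summing
   the unit flows of these walks gives a circulation G with the sign pattern of A whose nonzero
   entries have modulus at least 1. Every + entry of A lies inside a strongly connected
   component of A_+, so the same construction inside A_+ gives a nonnegative circulation C
   carried by the + entries. For large K, F = K C + G has the sign pattern of A and equal row
   and column sums h > 0, so M = diag(h)^-1 F fixes the all-ones vector and has the positive
   left eigenvector h. Fixed vectors of M and of M^T correspond to harmonic functions of F and
   of F^T, which a quantitative maximum principle (C dominates, G is a perturbation of relative
   size 1/K) shows to be constant. Then 1 is a simple eigenvalue: writing
   char M = (X - 1)^m r with r(1) != 0, the matrix r(M) is c 1 h^T with c != 0, and
   r(M)^2 = c^2 (h^T 1) 1 h^T is entrywise positive. *)

From Pilot Require Import Defs.
From HB Require Import structures.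
From mathcomp Require Import all_boot all_order all_algebra.
From mathcomp Require Import reals ring lra.
Set Implicit Arguments. Unset Strict Implicit. Unset Printing Implicit Defensive.
Import Order.TTheory GRing.Theory Num.Theory.
Local Open Scope ring_scope.

Lemma ler_sum_term (R : numDomainType) (I : finType) (P : pred I) (F : I -> R) x :
  (forall i, P i -> 0 <= F i) -> P x -> F x <= \sum_(i | P i) F i.
Proof.
move=> F_ge0 Px; rewrite (bigD1 x) //= lerDl.
by apply: sumr_ge0 => i /andP [Pi _]; apply: F_ge0.
Qed.

Section SimpleEigenvalue.

Variables (R : realType) (n : nat) (M : 'M[R]_n.+1) (h : 'rV[R]_n.+1).
Hypothesis h_gt0 : forall j, 0 < h 0 j.
Hypothesis M_ones : M *m (const_mx 1 : 'cV_n.+1) = const_mx 1.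
Hypothesis h_eigen : h *m M = h.
Hypothesis right_fixed : forall v : 'cV_n.+1, M *m v = v -> exists c, v = const_mx c.
Hypothesis left_fixed : forall w : 'rV_n.+1, w *m M = w -> exists c, w = c *: h.

Let L := M - 1.

Lemma fixed_cols_const (Y : 'M_n.+1) : M *m Y = Y -> forall i j, Y i j = Y 0 j.
Proof.
move=> MY i j.
have [c /matrixP cE] : exists c, col j Y = const_mx c.
  by apply: right_fixed; rewrite !colE mulmxA MY.
by have := cE i 0; have := cE 0 0; rewrite !mxE => -> ->.
Qed.

Lemma kerL_fixed (Y : 'M_n.+1) : L *m Y = 0 -> M *m Y = Y.
Proof. by rewrite mulmxBl mul1mx => /eqP; rewrite subr_eq0 => /eqP. Qed.

Lemma h_sum_gt0 : 0 < \sum_j h 0 j.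
Proof.
by apply: (lt_le_trans (h_gt0 0)); rewrite (bigD1 0) //= lerDl sumr_ge0 // => j _; apply: ltW.
Qed.

Lemma kerL_cap_imL (Y Z : 'M_n.+1) : L *m Y = 0 -> Y = L *m Z -> Y = 0.
Proof.
move=> /kerL_fixed /fixed_cols_const Yc YZ.
have hY : h *m Y = 0 by rewrite YZ mulmxA mulmxBr h_eigen mulmx1 subrr mul0mx.
apply/matrixP => i j; rewrite Yc mxE.
have /matrixP/(_ 0 j) := hY; rewrite !mxE.
under eq_bigr do rewrite Yc; rewrite -mulr_suml => /eqP.
by rewrite mulf_eq0 (gt_eqF h_sum_gt0) => /eqP.
Qed.

Lemma kerLX_kerL k (Y : 'M_n.+1) : L ^+ k *m Y = 0 -> L *m Y = 0.
Proof.
elim: k Y => [|k IH] Y; first by rewrite expr0 mul1mx => ->; rewrite mulmx0.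
by rewrite exprSr -mulmxE -mulmxA => /IH /kerL_cap_imL; apply.
Qed.

Lemma horner_mx_const (p : {poly R}) : horner_mx M p *m (const_mx 1 : 'cV_n.+1) = const_mx p.[1].
Proof.
elim/poly_ind: p => [|p c IH].
  by apply/matrixP => i j; rewrite rmorph0 mul0mx horner0 !mxE.
rewrite rmorphD rmorphM /= horner_mx_X horner_mx_C mulmxDl -mulmxE -mulmxA M_ones IH.
by rewrite mul_scalar_mx hornerMXaddC; apply/matrixP => i j; rewrite !mxE !mulr1.
Qed.

Theorem alg_positive_of_simple_eigenvalue : alg_positive M.
Proof.
have [m [r r1 charM]] := multiplicity_XsubC (char_poly M) 1.
have {}r1 : r.[1] != 0 by move: r1; rewrite monic_neq0 ?char_poly_monic.
set X := horner_mx M r.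
have hL : horner_mx M ('X - 1%:P) = L by rewrite rmorphB /= horner_mx_X horner_mx_C.
have LX : L *m X = 0.
  apply: (kerLX_kerL (k := m)); rewrite mulmxE -hL -rmorphXn -rmorphM /= mulrC -charM.
  exact: Cayley_Hamilton.
have XM : X *m M = X.
  have : X *m L = 0 by rewrite mulmxE -hL -rmorphM mulrC rmorphM /= hL -mulmxE.
  by rewrite mulmxBr mulmxE mulr1 => /eqP; rewrite subr_eq0 => /eqP.
have [c rowX] : exists c, row 0 X = c *: h by apply: left_fixed; rewrite -row_mul XM.
have XE i j : X i j = c * h 0 j.
  by rewrite (fixed_cols_const (kerL_fixed LX)); have /matrixP/(_ 0 j) := rowX; rewrite !mxE.
have c_neq0 : c != 0.
  apply: contra r1 => /eqP c0; have /matrixP/(_ 0 0) := horner_mx_const r.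
  by rewrite !mxE -/X => <-; apply/eqP/big1 => j _; rewrite XE c0 !mul0r.
exists (r * r) => i j; rewrite rmorphM /= -/X -mulmxE mxE.
under eq_bigr do rewrite !XE mulrACA -expr2 mulrC.
rewrite -!mulr_suml mulr_gt0 ?exprn_even_gt0 //.
exact: mulr_gt0 h_sum_gt0 (h_gt0 j).
Qed.

End SimpleEigenvalue.

Definition circulation (R : nmodType) n (Z : 'M[R]_n) :=
  forall k, \sum_j Z k j = \sum_j Z j k.

Definition harmonic (R : pzRingType) n (F : 'M[R]_n) (v : 'I_n -> R) :=
  forall i, \sum_j F i j * (v i - v j) = 0.

Definition harmonic_const (R : pzRingType) n (F : 'M[R]_n) :=
  forall v, harmonic F v -> forall i j, v i = v j.

Definition row_normalize (R : fieldType) n (F : 'M[R]_n) : 'M[R]_n :=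
  \matrix_(i, j) (F i j / \sum_k F i k).

Lemma harmonicE (R : comPzRingType) n (F : 'M[R]_n) (v : 'I_n -> R) i :
  \sum_j F i j * (v i - v j) = v i * \sum_j F i j - \sum_j F i j * v j.
Proof. by rewrite mulr_sumr -sumrB; apply: eq_bigr => j _; rewrite mulrBr mulrC. Qed.

Section RowNormalize.

Variables (R : realType) (n : nat) (F : 'M[R]_n.+1).
Hypothesis F_circ : circulation F.
Hypothesis rowsum_gt0 : forall i, 0 < \sum_j F i j.

Let rowsum_neq0 i : \sum_j F i j != 0. Proof. by rewrite gt_eqF. Qed.

Lemma row_normalize_fixed_harmonic (v : 'cV_n.+1) :
  row_normalize F *m v = v -> harmonic F (fun i => v i 0).
Proof.
move=> /matrixP Mv i; rewrite harmonicE; apply/eqP; rewrite subr_eq0; apply/eqP.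
have := Mv i 0; rewrite mxE; under eq_bigr do rewrite mxE mulrAC.
by rewrite -mulr_suml => <-; rewrite divfK.
Qed.

Lemma row_normalize_AP :
  harmonic_const F -> harmonic_const F^T -> alg_positive (row_normalize F).
Proof.
move=> F_const FT_const.
apply: (@alg_positive_of_simple_eigenvalue _ _ _ (\row_j \sum_k F j k)).
- by move=> j; rewrite mxE.
- apply/matrixP => i j; rewrite !mxE; under eq_bigr do rewrite !mxE mulr1.
  by rewrite -mulr_suml divff.
- apply/matrixP => i j; rewrite !mxE F_circ; apply: eq_bigr => k _.
  by rewrite !mxE mulrC divfK.
- move=> v /row_normalize_fixed_harmonic /F_const vc.
  by exists (v 0 0); apply/matrixP => i j; rewrite ord1 mxE (vc i 0).
move=> w /matrixP wM; exists (w 0 0 / \sum_k F 0 k); apply/matrixP => i j.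
rewrite ord1 !mxE; apply/esym/(canLR (divfK (rowsum_neq0 j))).
apply: (FT_const (fun k => w 0 k / \sum_l F k l)) => k.
rewrite harmonicE; apply/eqP; rewrite subr_eq0; apply/eqP.
have colF : \sum_l F^T k l = \sum_l F k l by rewrite F_circ; apply: eq_bigr => l _; rewrite mxE.
rewrite colF divfK // -{1}wM mxE; apply: eq_bigr => l _.
by rewrite !mxE mulrCA !mulrA.
Qed.

End RowNormalize.

Definition mx_l1 (R : numDomainType) n (Z : 'M[R]_n) : R := \sum_i \sum_j `|Z i j|.

Lemma mx_l1_ge0 (R : numDomainType) n (Z : 'M[R]_n) : 0 <= mx_l1 Z.
Proof. by apply: sumr_ge0 => i _; apply: sumr_ge0. Qed.

Lemma mx_l1_tr (R : numDomainType) n (Z : 'M[R]_n) : mx_l1 Z^T = mx_l1 Z.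
Proof.
by rewrite /mx_l1 exchange_big; apply: eq_bigr => i _; apply: eq_bigr => j _; rewrite mxE.
Qed.

Lemma row_l1_le_mx_l1 (R : numDomainType) n (Z : 'M[R]_n) i : \sum_j `|Z i j| <= mx_l1 Z.
Proof.
by rewrite /mx_l1 [leRHS](bigD1 i) //= lerDl; apply: sumr_ge0 => k _; apply: sumr_ge0.
Qed.

Lemma exit_arc (T : finType) (e : rel T) (S : {set T}) x y :
  connect e x y -> x \in S -> y \notin S -> exists2 a, a \in S & exists2 b, b \notin S & e a b.
Proof.
case/connectP => p; elim: p x => [|z p IH] x /=; first by move=> _ -> ->.
case/andP => xz zp yE xS yS; have [zS|zS] := boolP (z \in S); first exact: IH zp yE zS yS.
by exists x => //; exists z.
Qed.

Section ClosedSet.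

Variables (R : realDomainType) (n : nat) (C : 'M[R]_n) (S : {set 'I_n}).
Hypothesis C_ge0 : forall i j, 0 <= C i j.
Hypothesis C_circ : circulation C.
Hypothesis S_closed : forall i j, i \in S -> 0 < C i j -> j \in S.

Lemma closed_out_zero i j : i \in S -> j \notin S -> C i j = 0.
Proof.
move=> iS jS; apply/eqP; rewrite eq_le C_ge0 andbT leNgt.
by apply: contra jS; apply: S_closed.
Qed.

Lemma closed_in_zero i j : i \notin S -> j \in S -> C i j = 0.
Proof.
have inflow0 : \sum_(k in S) \sum_(l | l \notin S) C l k = 0.
  have colE k : \sum_(l | l \notin S) C l k = \sum_l C l k - \sum_(l in S) C l k.
    by rewrite [\sum_l _](bigID (mem S)) /= addrAC subrr add0r.
  have rowE k : k \in S -> \sum_l C k l = \sum_(l in S) C k l.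
    move=> kS; rewrite (bigID (mem S)) /= [X in _ + X]big1 ?addr0 // => l.
    exact: closed_out_zero.
  under eq_bigr do rewrite colE -C_circ.
  rewrite sumrB [X in X - _](eq_bigr _ rowE) exchange_big.
  by apply/eqP; rewrite subr_eq0.
move=> iS jS.
have := psumr_eq0P (fun k _ => sumr_ge0 _ (fun l _ => C_ge0 l k)) inflow0 jS.
by move/psumr_eq0P; apply.
Qed.

Lemma closed_circulation_cancel (u : 'I_n -> R) :
  \sum_(i in S) \sum_j C i j * (u i - u j) = 0.
Proof.
under eq_bigr do rewrite harmonicE; rewrite sumrB; apply/eqP; rewrite subr_eq0; apply/eqP.
rewrite [RHS]exchange_big /= [RHS](bigID (mem S)) /= [X in _ = _ + X]big1 ?addr0 => [|j jS].
  apply: eq_bigr => j jS; rewrite C_circ mulrC mulr_suml.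
  rewrite [LHS](bigID (mem S)) /= [X in _ + X]big1 ?addr0 // => i iS.
  by rewrite closed_in_zero ?mul0r.
by apply: big1 => i iS; rewrite closed_out_zero ?mul0r.
Qed.

End ClosedSet.

Definition admissible_pair (R : realDomainType) n (C G : 'M[R]_n) :=
  [/\ circulation C,
      forall i j, (C i j == 0) || (1 <= C i j),
      forall i j, (0 <= G i j) || (G i j <= -1),
      forall i j, 0 < G i j -> 0 < C i j &
      forall i j, connect [rel x y | (0 < C x y) || (G x y < 0)] i j].

(* The level sets {v >= max v - d} of a (K C + G)-harmonic v gain a vertex each time d is
   replaced by a d + b, where a = 1 + |C|_1 + |G|_1 and b = |G|_1 osc(v) / K; after n + 1 such
   steps they are everything, whence osc(v) <= rigidity_threshold C G * osc(v) / K. *)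
Definition rigidity_threshold (R : realFieldType) n (C G : 'M[R]_n.+1) : R :=
  mx_l1 G * \sum_(k < n.+1) (1 + mx_l1 C + mx_l1 G) ^+ k.

Lemma mx_l1_le_rigidity_threshold (R : realFieldType) n (C G : 'M[R]_n.+1) :
  mx_l1 G <= rigidity_threshold C G.
Proof.
rewrite /rigidity_threshold ler_peMr ?mx_l1_ge0 // big_ord_recl expr0 lerDl.
apply: sumr_ge0 => k _; apply: exprn_ge0.
by have := mx_l1_ge0 C; have := mx_l1_ge0 G; lra.
Qed.

Section HarmonicRigidity.

Variables (R : realFieldType) (n : nat) (C G : 'M[R]_n.+1) (K : R).
Hypothesis CG : admissible_pair C G.
Hypothesis K_large : rigidity_threshold C G < K.

Let C_circ : circulation C. Proof. by case: CG. Qed.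
Let C_ge0 i j : 0 <= C i j.
Proof. by case: CG => _ /(_ i j) /orP [/eqP->|/(le_trans ler01)]. Qed.
Let C_ge1 i j : 0 < C i j -> 1 <= C i j.
Proof. by case: CG => _ /(_ i j) /orP [/eqP->|//]; rewrite ltxx. Qed.
Let G_le1 i j : G i j < 0 -> G i j <= -1.
Proof.
move=> Gneg; case: CG => _ _ /(_ i j) /orP [G0|//].
by have := lt_le_trans Gneg G0; rewrite ltxx.
Qed.
Let G_gt0 i j : 0 < G i j -> 0 < C i j. Proof. by case: CG => _ _ _ /(_ i j). Qed.
Let CG_connected i j : connect [rel x y | (0 < C x y) || (G x y < 0)] i j.
Proof. by case: CG. Qed.

Let a := 1 + mx_l1 C + mx_l1 G.
Let a_ge1 : 1 <= a. Proof. by have := mx_l1_ge0 C; have := mx_l1_ge0 G; rewrite /a; lra. Qed.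

Let K_gt0 : 0 < K.
Proof.
exact: le_lt_trans (mx_l1_ge0 G) (le_lt_trans (mx_l1_le_rigidity_threshold C G) K_large).
Qed.

Section Levels.

Variable v : 'I_n.+1 -> R.
Hypothesis v_harmonic : harmonic (K *: C + G) v.

Let m := v [arg max_(i > ord0) v i]%O.
Let mn := v [arg min_(i < ord0) v i]%O.
Let b := mx_l1 G * (m - mn) / K.
Let level d := [set j | m - d <= v j].

Let le_max j : v j <= m.
Proof. by rewrite /m; case: arg_maxP => // i _; apply. Qed.
Let ge_min j : mn <= v j.
Proof. by rewrite /mn; case: arg_minP => // i _; apply. Qed.
Let b_ge0 : 0 <= b.
Proof.
rewrite /b divr_ge0 ?(ltW K_gt0) // mulr_ge0 ?mx_l1_ge0 //.
by have := le_max ord0; have := ge_min ord0; lra.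
Qed.

Let osc i j : `|v i - v j| <= m - mn.
Proof.
by rewrite ler_norml; have := le_max i; have := le_max j; have := ge_min i; have := ge_min j; lra.
Qed.

Lemma C_row_deficit x : \sum_j C x j * (v x - v j) <= b.
Proof.
rewrite /b ler_pdivlMr // mulrC.
have := v_harmonic x; under eq_bigr do rewrite !mxE mulrDl -mulrA.
rewrite big_split /= -mulr_sumr => /eqP; rewrite addr_eq0 => /eqP ->.
rewrite -sumrN; apply: le_trans (_ : \sum_j `|G x j| * (m - mn) <= _).
  apply: ler_sum => j _; apply: le_trans (ler_norm _) _.
  by rewrite normrN normrM ler_wpM2l.
by rewrite -mulr_suml ler_wpM2r ?row_l1_le_mx_l1 // (le_trans _ (osc ord0 ord0)).
Qed.

Lemma exit_along_C d x y :
  0 <= d -> m - d <= v x -> 0 < C x y -> m - (mx_l1 C * d + b) <= v y.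
Proof.
move=> d_ge0 vx Cxy.
have gap_ge0 j : 0 <= v x - v j + d by have := le_max j; lra.
have rowC : \sum_j C x j <= mx_l1 C.
  by apply: le_trans (row_l1_le_mx_l1 C x); apply: ler_sum => j _; rewrite ler_norm.
have row_bound : \sum_j C x j * (v x - v j + d) <= b + mx_l1 C * d.
  under eq_bigr do rewrite mulrDr; rewrite big_split /= -mulr_suml.
  by rewrite lerD ?C_row_deficit ?ler_wpM2r.
have : C x y * (v x - v y + d) <= b + mx_l1 C * d.
  apply: le_trans row_bound; rewrite (bigD1 y) //= lerDl.
  by apply: sumr_ge0 => j _; apply: mulr_ge0.
have : v x - v y + d <= C x y * (v x - v y + d) by rewrite ler_peMl ?C_ge1.
lra.
Qed.

Lemma exit_along_G d x y :
  0 <= d -> (forall i j, i \in level d -> 0 < C i j -> j \in level d) ->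
  x \in level d -> G x y < 0 -> m - mx_l1 G * d <= v y.
Proof.
move=> d_ge0 closed xS Gxy; set S := level d.
have inS i : (i \in S) = (m - d <= v i) by rewrite inE.
have G_cancel : \sum_(i in S) \sum_j G i j * (v i - v j) = 0.
  have : \sum_(i in S) \sum_j (K *: C + G) i j * (v i - v j) = 0.
    by apply: big1 => i _; apply: v_harmonic.
  under eq_bigr do (under eq_bigr do rewrite !mxE mulrDl -mulrA;
                    rewrite big_split /= -mulr_sumr).
  by rewrite big_split /= -mulr_sumr closed_circulation_cancel // mulr0 add0r.
have slack_ge0 i j : i \in S -> 0 <= `|G i j| * d - G i j * (v i - v j).
  rewrite subr_ge0 inS => vi; have := le_max i; have := le_max j.
  case: (ltgtP (G i j) 0) => [Gneg|Gpos|->]; last by rewrite normr0 !mul0r.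
    by rewrite ltr0_norm //; nra.
  have : j \in S by apply: closed (G_gt0 Gpos); rewrite inS.
  by rewrite gtr0_norm // inS; nra.
have slack_sum : \sum_(i in S) \sum_j (`|G i j| * d - G i j * (v i - v j)) <= mx_l1 G * d.
  under eq_bigr do rewrite sumrB; rewrite sumrB G_cancel subr0.
  under eq_bigr do rewrite -mulr_suml; rewrite -mulr_suml ler_wpM2r //.
  rewrite /mx_l1 [leRHS](bigID (mem S)) /= lerDl.
  by apply: sumr_ge0 => i _; apply: sumr_ge0.
have : `|G x y| * d - G x y * (v x - v y) <= mx_l1 G * d.
  apply: le_trans slack_sum; apply: le_trans (ler_sum_term _ xS).
    by apply: (ler_sum_term (P := xpredT)) => // j _; apply: slack_ge0.
  by move=> i iS; apply: sumr_ge0 => j _; apply: slack_ge0.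
rewrite ltr0_norm // => slack_xy; rewrite inS in xS.
have := G_le1 Gxy; have := le_max x; have := mulr_ge0 (mx_l1_ge0 G) d_ge0; nra.
Qed.

(* An arc leaving a level set is either a C-arc, across which the almost balanced C-part of
   the row equation bounds the drop of v, or, when the level set is closed under C-arcs, a
   G-arc, and then the C-part cancels out over the whole level set. *)
Lemma level_step d :
  0 <= d -> level d != setT -> exists2 y, y \notin level d & m - (a * d + b) <= v y.
Proof.
move=> d_ge0 not_full.
have [y0 _ y0_out] : exists2 y0, y0 \in setT & y0 \notin level d.
  by apply/subsetPn; rewrite subTset.
have max_in : [arg max_(i > ord0) v i]%O \in level d by rewrite inE -/m; lra.
have ad_ge : mx_l1 C * d + b <= a * d + b /\ mx_l1 G * d <= a * d + b.
  have := mulr_ge0 (mx_l1_ge0 C) d_ge0; have := mulr_ge0 (mx_l1_ge0 G) d_ge0.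
  by have := b_ge0; rewrite /a !mulrDl mul1r; lra.
case: (boolP [exists x in level d, exists y in ~: level d, 0 < C x y]).
  case/exists_inP => x; rewrite inE => vx /exists_inP [y]; rewrite inE => y_out Cxy.
  by exists y => //; apply: le_trans (exit_along_C d_ge0 vx Cxy); lra.
rewrite negb_exists_in => /forall_inP no_C_exit.
have closed i j : i \in level d -> 0 < C i j -> j \in level d.
  move=> iS Cij; apply: contraT => j_out.
  have /exists_inPn /(_ j) := no_C_exit i iS.
  by rewrite inE j_out Cij => /(_ isT).
have [x xS [y y_out /orP [Cxy|Gxy]]] := exit_arc (CG_connected _ y0) max_in y0_out.
  by move: y_out; rewrite (closed x y).
by exists y => //; apply: le_trans (exit_along_G d_ge0 closed xS Gxy); lra.
Qed.

Let depth k := b * \sum_(i < k) a ^+ i.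

Let depth_ge0 k : 0 <= depth k.
Proof.
apply: mulr_ge0 b_ge0 (sumr_ge0 _ _) => i _.
by apply: exprn_ge0; apply: le_trans a_ge1.
Qed.

Let depthS k : depth k.+1 = a * depth k + b.
Proof.
rewrite /depth big_ord_recl expr0 mulrDr mulr1 addrC mulrCA; congr (b * _ + _).
by rewrite mulr_sumr; apply: eq_bigr => i _; rewrite -exprS.
Qed.

Lemma level_growth k : level (depth k) = setT \/ (k < #|level (depth k)|)%N.
Proof.
elim: k => [|k IH].
  right; rewrite card_gt0; apply/set0Pn; exists [arg max_(i > ord0) v i]%O.
  by rewrite inE /depth big_ord0 mulr0 subr0.
have grow : level (depth k) \subset level (depth k.+1).
  apply/subsetP => j; rewrite !inE depthS.
  by have := depth_ge0 k; have := b_ge0; have := a_ge1; nra.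
have [full|not_full] := eqVneq (level (depth k)) setT.
  by left; apply/eqP; rewrite eqEsubset subsetT -full.
right; case: IH => [full|card_lt]; first by rewrite full eqxx in not_full.
have [y y_out vy] := level_step (depth_ge0 k) not_full.
apply: leq_ltn_trans card_lt (proper_card _); apply/properP; split => //.
by exists y => //; rewrite inE depthS.
Qed.

Lemma harmonic_levels_const i j : v i = v j.
Proof.
have full : level (depth n.+1) = setT.
  case: (level_growth n.+1) => // card_big.
  by have := leq_trans card_big (max_card _); rewrite card_ord ltnn.
have : [arg min_(i < ord0) v i]%O \in level (depth n.+1) by rewrite full inE.
rewrite inE -/mn /depth /b => low.
have : (m - mn) * K <= rigidity_threshold C G * (m - mn).
  rewrite -ler_pdivlMr // /rigidity_threshold -/a.
  suff -> : mx_l1 G * (\sum_(k < n.+1) a ^+ k) * (m - mn) / K =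
            mx_l1 G * (m - mn) / K * \sum_(k < n.+1) a ^+ k by lra.
  ring.
have := K_large; have := le_max i; have := le_max j; have := ge_min i; have := ge_min j.
nra.
Qed.

End Levels.

Lemma admissible_harmonic_const : harmonic_const (K *: C + G).
Proof. by move=> v v_harm i j; apply: harmonic_levels_const. Qed.

End HarmonicRigidity.

Lemma circulation_tr (R : nmodType) n (Z : 'M[R]_n) : circulation Z -> circulation Z^T.
Proof.
move=> Zc k; under eq_bigr do rewrite mxE; under [RHS]eq_bigr do rewrite mxE.
by rewrite Zc.
Qed.

Lemma admissible_pair_tr (R : realDomainType) n (C G : 'M[R]_n) :
  admissible_pair C G -> admissible_pair C^T G^T.
Proof.
case=> Cc C01 G01 GC conn; split=> [|i j|i j|i j|i j]; rewrite ?mxE.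
- exact: circulation_tr.
- exact: C01.
- exact: G01.
- exact: GC.
rewrite (eq_connect (e' := [rel x y | (0 < C y x) || (G y x < 0)])) => [|x y].
  by have := connect_rev [rel x y | (0 < C x y) || (G x y < 0)] i j; rewrite /= conn.
by rewrite /= !mxE.
Qed.

Lemma rigidity_threshold_tr (R : realFieldType) n (C G : 'M[R]_n.+1) :
  rigidity_threshold C^T G^T = rigidity_threshold C G.
Proof. by rewrite /rigidity_threshold !mx_l1_tr. Qed.

Section SignedCirculations.

Variables (R : realDomainType) (n : nat).

Definition weak_sign (s : sign) (r : R) : bool :=
  match s with SPos => 0 <= r | SNeg => r <= 0 | SZero => r == 0 end.

Definition strong_sign (s : sign) (r : R) : bool :=
  match s with SPos => 1 <= r | SNeg => r <= -1 | SZero => r == 0 end.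

Definition signed_circulation (P : spattern n) (Z : 'M[R]_n) :=
  circulation Z /\ forall i j, strong_sign (P i j) (Z i j).

Lemma weak_sign0 s : weak_sign s 0.
Proof. by case: s => /=. Qed.

Lemma weak_signD s a b : weak_sign s a -> weak_sign s b -> weak_sign s (a + b).
Proof.
by case: s => /=; [exact: addr_ge0 | move=> *; lra | move=> /eqP-> /eqP->; rewrite addr0].
Qed.

Lemma weak_sign_sum (I : finType) (Q : pred I) s (f : I -> R) :
  (forall i, weak_sign s (f i)) -> weak_sign s (\sum_(i | Q i) f i).
Proof.
by move=> fs; apply: (big_ind (weak_sign s)) => //; [exact: weak_sign0 | exact: weak_signD].
Qed.

Lemma strong_signD s a b : strong_sign s a -> weak_sign s b -> strong_sign s (a + b).
Proof. by case: s => /= [||/eqP-> /eqP->]; rewrite ?addr0 //; lra. Qed.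

Definition B_arc (P : spattern n) : rel 'I_n := fun x y => is_pos (P x y) || is_neg (P y x).

Lemma arc_B_of (P : spattern n) : Defs.arc (B_of P) =2 B_arc P.
Proof. by move=> x y; rewrite /Defs.arc /B_arc mxE; case: ifP. Qed.

Variable P : spattern n.

(* A B_P-arc x -> y comes from a + entry at (x, y) or a - entry at (y, x); either way its unit
   flow has divergence [x] - [y]. *)
Definition arc_flow (x y : 'I_n) : 'M[R]_n :=
  if is_pos (P x y) then delta_mx x y else - delta_mx y x.

Fixpoint walk_flow (x : 'I_n) (p : seq 'I_n) : 'M[R]_n :=
  if p is y :: q then arc_flow x y + walk_flow y q else 0.

Lemma sum_delta_row (x y k : 'I_n) : \sum_j delta_mx x y k j = (k == x)%:R :> R.
Proof.
rewrite (bigD1 y) //= mxE eqxx andbT big1 ?addr0 // => j /negbTE jy.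
by rewrite mxE jy andbF.
Qed.

Lemma sum_delta_col (x y k : 'I_n) : \sum_j delta_mx x y j k = (k == y)%:R :> R.
Proof.
rewrite (bigD1 x) //= mxE eqxx eq_sym big1 ?addr0 // => j /negbTE jx.
by rewrite mxE jx.
Qed.

Lemma walk_flow_divergence x p k :
  \sum_j walk_flow x p k j - \sum_j walk_flow x p j k = (k == x)%:R - (k == last x p)%:R.
Proof.
elim: p x => [|y p IH] x /=; first by rewrite !big1 ?subrr // => j; rewrite mxE.
under eq_bigr do rewrite mxE; under [X in _ - X]eq_bigr do rewrite mxE.
rewrite !big_split /= opprD addrACA IH /arc_flow; case: ifP => _.
  by rewrite sum_delta_row sum_delta_col; ring.
under eq_bigr do rewrite mxE; under [X in _ - X + _]eq_bigr do rewrite mxE.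
by rewrite !sumrN sum_delta_row sum_delta_col; ring.
Qed.

Lemma walk_flow_weak_sign x p : path (B_arc P) x p ->
  forall i j, weak_sign (P i j) (walk_flow x p i j).
Proof.
elim: p x => [|y p IH] x /=; first by move=> _ i j; rewrite mxE weak_sign0.
case/andP => xy /IH yp i j; rewrite mxE; apply: weak_signD => //.
rewrite /arc_flow; case: ifP => Pxy in xy *; rewrite !mxE.
  case: (boolP ((i == x) && (j == y))) => [/andP [/eqP-> /eqP->]|_]; last exact: weak_sign0.
  by case: (P x y) Pxy => //= _; rewrite ler01.
case: (boolP ((i == y) && (j == x))) => [/andP [/eqP-> /eqP->]|_]; last by rewrite oppr0 weak_sign0.
by move: xy; rewrite /B_arc Pxy /=; case: (P y x) => //= _; rewrite oppr_le0 ler01.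
Qed.

Lemma walk_flow_circulation x p : last x p = x -> circulation (walk_flow x p).
Proof.
move=> px k; apply/eqP; rewrite -subr_eq0 walk_flow_divergence px.
by rewrite subrr.
Qed.

Definition signed_circulation_at i j (Z : 'M[R]_n) :=
  [/\ circulation Z, forall a b, weak_sign (P a b) (Z a b) & strong_sign (P i j) (Z i j)].

Lemma signed_circulation_at_exists i j :
  (P i j = SPos -> connect (B_arc P) j i) -> (P i j = SNeg -> connect (B_arc P) i j) ->
  exists Z, signed_circulation_at i j Z.
Proof.
move=> back forth; case Pij: (P i j).
- have /connectP [p ji_p pi] := back Pij.
  have ij_p : path (B_arc P) i (j :: p) by rewrite /= ji_p /B_arc Pij.
  exists (walk_flow i (j :: p)); split; first exact: walk_flow_circulation.
    exact: walk_flow_weak_sign.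
  rewrite [walk_flow _ _]/= mxE; apply: strong_signD.
    by rewrite /arc_flow Pij mxE !eqxx /= lexx.
  by have := walk_flow_weak_sign ji_p i j; rewrite Pij.
- have /connectP [p ij_p pj] := forth Pij.
  exists (- delta_mx i j + walk_flow i p); split.
  + move=> k; apply/eqP; rewrite -subr_eq0.
    under eq_bigr do rewrite mxE; under [X in _ - X]eq_bigr do rewrite mxE.
    rewrite !big_split /= opprD addrACA walk_flow_divergence -pj.
    under eq_bigr do rewrite mxE; under [X in _ - X + _]eq_bigr do rewrite mxE.
    by rewrite !sumrN sum_delta_row sum_delta_col; apply/eqP; ring.
  + move=> a b; rewrite !mxE; apply: weak_signD; last exact: walk_flow_weak_sign.
    case: (boolP ((a == i) && (b == j))) => [/andP [/eqP-> /eqP->]|_].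
      by rewrite Pij /= oppr_le0 ler01.
    by rewrite oppr0 weak_sign0.
  + rewrite mxE; apply: strong_signD; first by rewrite Pij !mxE !eqxx /= lexx.
    by have := walk_flow_weak_sign ij_p i j; rewrite Pij.
- exists 0; split => [k|a b|]; rewrite ?mxE ?Pij ?weak_sign0 //=.
  by apply: eq_bigr => l _; rewrite !mxE.
Qed.

Lemma signed_circulation_exists :
  (forall i j, P i j = SPos -> connect (B_arc P) j i) ->
  (forall i j, P i j = SNeg -> connect (B_arc P) i j) ->
  exists Z : 'M[R]_n, signed_circulation P Z.
Proof.
move=> back forth.
have /fin_all_exists [Zf Zf_spec] :
    forall ij : 'I_n * 'I_n, exists Z, signed_circulation_at ij.1 ij.2 Z.
  by move=> [i j]; apply: signed_circulation_at_exists; [exact: back | exact: forth].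
exists (\sum_ij Zf ij); split.
  move=> k; under eq_bigr do rewrite summxE; under [RHS]eq_bigr do rewrite summxE.
  rewrite exchange_big [RHS]exchange_big; apply: eq_bigr => ij _.
  by case: (Zf_spec ij).
move=> i j; rewrite summxE (bigD1 (i, j)) //=; case: (Zf_spec (i, j)) => _ _ /strong_signD; apply.
by apply: weak_sign_sum => ij; case: (Zf_spec ij).
Qed.

End SignedCirculations.

Lemma circulation_comb (R : comPzRingType) n (C G : 'M[R]_n) (K : R) :
  circulation C -> circulation G -> circulation (K *: C + G).
Proof.
move=> Cc Gc k; under eq_bigr do rewrite !mxE; under [RHS]eq_bigr do rewrite !mxE.
by rewrite !big_split /= -!mulr_sumr Cc Gc.
Qed.

Definition scc (T : finType) (e : rel T) (x : T) : {set T} :=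
  [set y | connect e x y && connect e y x].

Lemma scc_connect_within (T : finType) (e : rel T) x y z :
  y \in scc e x -> z \in scc e x ->
  connect [rel u w | [&& u \in scc e x, w \in scc e x & e u w]] y z.
Proof.
rewrite !inE => /andP [xy yx] /andP [xz zx].
have /connectP [p yp zE] := connect_trans yx xz.
apply/connectP; exists p => //; rewrite {}zE {xz} in zx.
elim: p y xy yx yp zx => [|w p IH] y xy yx //= /andP [yw wp] px.
have xw := connect_trans xy (connect1 yw).
have wx : connect e w x by apply: connect_trans px; apply/connectP; exists p.
by rewrite !inE xy yx xw wx yw /=; apply: IH.
Qed.

Lemma scc_irr_component n (M : spattern n) x : irr_component M (scc (Defs.arc M) x).
Proof.
set e := Defs.arc M; have xx : x \in scc e x by rewrite inE connect0.
apply/and3P; split.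
- by apply/set0Pn; exists x.
- by apply/forallP => y; apply/implyP => ys; apply/forallP => z; apply/implyP => zs;
    exact: scc_connect_within.
apply/forallP => S; apply/implyP => /properP [sccS [z zS zscc]]; apply/negP => S_irr.
have conn u w : u \in S -> w \in S -> connect e u w.
  move=> uS wS; move/forallP/(_ u)/implyP/(_ uS)/forallP/(_ w)/implyP/(_ wS): S_irr.
  by apply: connect_sub => a b /and3P [_ _ ab]; exact: connect1.
have xS := subsetP sccS x xx.
by move: zscc; rewrite inE !conn.
Qed.

Definition no_pos_across_components n (A : spattern n) : Prop :=
  forall alpha beta : {set 'I_n},
    irr_component (pos_part A) alpha -> irr_component (pos_part A) beta -> alpha != beta ->
    forall i j, i \in alpha -> j \in beta -> ~~ is_pos (A i j).

Lemma pos_entry_back n (A : spattern n) :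
  no_pos_across_components A ->
  forall i j, A i j = SPos -> connect (Defs.arc (pos_part A)) j i.
Proof.
move=> no_pos_between i j Aij; set e := Defs.arc (pos_part A).
have self k : k \in scc e k by rewrite inE connect0.
have [sccE|sccN] := eqVneq (scc e i) (scc e j).
  by move: (self j); rewrite -sccE inE => /andP [].
have := no_pos_between _ _ (scc_irr_component _ i) (scc_irr_component _ j) sccN i j.
by rewrite !self Aij => /(_ isT isT).
Qed.

Lemma arc_pos_part n (A : spattern n) : Defs.arc (pos_part A) =2 B_arc (pos_part A).
Proof. by move=> x y; rewrite /Defs.arc /B_arc !mxE; case: (A x y); case: (A y x). Qed.

Lemma pos_part_signed_circulation (R : realDomainType) n (A : spattern n) :
  no_pos_across_components A ->
  exists C : 'M[R]_n, signed_circulation (pos_part A) C.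
Proof.
move=> no_pos_between; apply: signed_circulation_exists => i j; rewrite mxE; last by case: (A i j).
case Aij: (A i j) => //= _; rewrite -(eq_connect (arc_pos_part A)).
exact: pos_entry_back Aij.
Qed.

Section SignPattern.

Variables (R : realType) (n : nat) (A : spattern n) (C G : 'M[R]_n).
Hypothesis C_sc : signed_circulation (pos_part A) C.
Hypothesis G_sc : signed_circulation A G.

Let C_sign i j : strong_sign (pos_part A i j) (C i j). Proof. by case: C_sc. Qed.
Let G_sign i j : strong_sign (A i j) (G i j). Proof. by case: G_sc. Qed.

Lemma admissible_pair_of_signed : irreducible A -> admissible_pair C G.
Proof.
move=> /forallP A_irr; split; first by case: C_sc.
- move=> i j; move: (C_sign i j); rewrite mxE.
  by case: (A i j) => /= [->|/eqP->|/eqP->]; rewrite ?orbT ?eqxx.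
- move=> i j; move: (G_sign i j).
  by case: (A i j) => /= [/(le_trans ler01)->|->|/eqP->]; rewrite ?orbT ?lexx.
- move=> i j; move: (C_sign i j) (G_sign i j); rewrite mxE.
  by case: (A i j) => /= [/(lt_le_trans ltr01) //|_ Gneg Gpos|_ /eqP Gz]; lra.
move=> i j; move/forallP: (A_irr i) => /(_ j); apply: connect_sub => x y xy.
apply: connect1; move: (C_sign x y) (G_sign x y) xy; rewrite mxE /Defs.arc /=.
case: (A x y) => //= C1 G1 _; first by rewrite (lt_le_trans ltr01 C1).
by rewrite (le_lt_trans G1) ?orbT // ltrN10.
Qed.

Variable K : R.
Hypothesis K_gt0 : 0 < K.

Lemma comb_in_qual_class : in_qual_class A (K *: C + G).
Proof.
move=> i j; move: (C_sign i j) (G_sign i j); rewrite !mxE.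
case: (A i j) => /= [C1 G0|/eqP-> G1|/eqP-> /eqP->]; rewrite ?mulr0 ?add0r //.
  by have := mulr_gt0 K_gt0 (lt_le_trans ltr01 C1); lra.
lra.
Qed.

Lemma comb_rowsum_gt0 i j : A i j = SPos -> mx_l1 G < K -> 0 < \sum_k (K *: C + G) i k.
Proof.
move=> Aij G_small; under eq_bigr do rewrite !mxE.
rewrite big_split /= -mulr_sumr.
have C_row : 1 <= \sum_k C i k.
  apply: le_trans (ler_sum_term (P := xpredT) (F := C i) (x := j) _ isT) => [|k _].
    by move: (C_sign i j); rewrite mxE Aij.
  by move: (C_sign i k); rewrite mxE; case: (A i k) => /= [/(le_trans ler01)|/eqP->|/eqP->].
have G_row : - mx_l1 G <= \sum_k G i k.
  rewrite lerNl -sumrN; apply: le_trans (row_l1_le_mx_l1 G i); apply: ler_sum => k _.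
  by rewrite -normrN ler_norm.
have : K <= K * \sum_k C i k by rewrite ler_peMr // ltW.
lra.
Qed.

End SignPattern.

Lemma row_normalize_in_qual_class (R : realType) n (A : spattern n) (F : 'M[R]_n) :
  (forall i, 0 < \sum_j F i j) -> in_qual_class A F -> in_qual_class A (row_normalize F).
Proof.
move=> rows_gt0 FA i j; move: (FA i j); rewrite mxE.
have inv_gt0 : 0 < (\sum_k F i k)^-1 by rewrite invr_gt0.
by case: (A i j) => [Fp|Fn|/eqP->]; [exact: mulr_gt0 | rewrite pmulr_llt0 | rewrite mul0r].
Qed.

Theorem theorem3p16 (R : realType) (n : nat) (A : spattern n.+1) :
  AP_irreducible A ->
  (forall alpha beta : {set 'I_n.+1},
      irr_component (pos_part A) alpha -> irr_component (pos_part A) beta ->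
      alpha != beta ->
      forall i j, i \in alpha -> j \in beta -> ~~ is_pos (A i j)) ->
  allows_AP R A.
Proof.
move=> /and4P [A_irr /forallP row_pos _ B_irr] no_pos_between.
have B_conn x y : connect (B_arc A) x y.
  by rewrite -(eq_connect (arc_B_of A)); move/forallP/(_ x)/forallP: B_irr; apply.
have [G G_sc] :=
  signed_circulation_exists R (fun i j _ => B_conn j i) (fun i j _ => B_conn i j).
have [C C_sc] := pos_part_signed_circulation R no_pos_between.
have CG := admissible_pair_of_signed C_sc G_sc A_irr.
set K := rigidity_threshold C G + 1; set F := K *: C + G.
have K_large : rigidity_threshold C G < K by rewrite ltrDl.
have G_small := le_lt_trans (mx_l1_le_rigidity_threshold C G) K_large.
have K_gt0 := le_lt_trans (mx_l1_ge0 G) G_small.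
have rows_gt0 i : 0 < \sum_j F i j.
  have /existsP [j] := row_pos i; case Aij: (A i j) => // _.
  by apply: (comb_rowsum_gt0 C_sc K_gt0 Aij).
exists (row_normalize F); split.
  exact: row_normalize_in_qual_class rows_gt0 (comb_in_qual_class C_sc G_sc K_gt0).
apply: row_normalize_AP rows_gt0 _ _.
- exact: circulation_comb (proj1 C_sc) (proj1 G_sc).
- exact: admissible_harmonic_const CG K_large.
rewrite /F linearD linearZ /=.
by apply: admissible_harmonic_const (admissible_pair_tr CG) _; rewrite rigidity_threshold_tr.
Qed.
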